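(* Let $M$ be a simple triangular grid graph and let $g,g'$ be nodes of $M$. For $q\in\{x,y,z\}$ let $d_q:=d_{M,q}(g,g')$ and $$P_q:=\{v\in M : d_{M,q}(g,v)=\lceil d_q/2\rceil \text{ and } d_{M,q}(g',v)=\lfloor d_q/2\rfloor\}.$$ Then for each $q\in\{x,y,z\}$, $P_q$ is a $q$-portal of $M$, and every $gg'$-path in $M$ contains a node of $P_q$.
   Context: $G_\Delta$ is the infinite regular triangular grid graph; its edges are parallel to three axes: the $x$-axis (East–West), the $y$-axis (NNE–SSW) and the $z$-axis (NNW–SSE). A triangular grid graph is the subgraph of $G_\Delta$ induced by a finite node set such that it is connected; it is simple if the subgraph of $G_\Delta$ induced by the complement of its node set is connected (i.e. no inner holes). For a triangular grid graph $\Gamma=(V_\Gamma,E_\Gamma)$ and $E_x\subseteq E_\Gamma$ the edges parallel to the $x$-axis, the $x$-portals of $\Gamma$ are the connected components of $(V_\Gamma,E_x)$; $y$- and $z$-portals are defined analogously. $\operatorname{portal}_q(u)$ denotes the $q$-portal containing $u$. The $q$-portal graph $\mathcal P_q$ has a node for each $q$-portal, two portals being adjacent iff some edge of $\Gamma$ joins them. The $q$-distance $d_{\Gamma,q}(u,v)$ is the distance between $\operatorname{portal}_q(u)$ and $\operatorname{portal}_q(v)$ in $\mathcal P_q$. *)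

(* Nodes of the infinite triangular grid G_Delta are encoded
   in axial coordinates (a,b) : int * int, the node at a*e1 + b*e2 with
   e1 = (1,0) (East) and e2 = (1/2, sqrt 3/2) (NNE). *)
From mathcomp Require Import all_boot all_order all_algebra.
Set Implicit Arguments. Unset Strict Implicit. Unset Printing Implicit Defensive.
Import Order.TTheory GRing.Theory Num.Theory.
Local Open Scope ring_scope.

Definition node := (int * int)%type.

Inductive axis := AX | AY | AZ.

Definition adjq (q : axis) (u v : node) : bool :=
  match q with
  | AX => (u.2 == v.2) && ((v.1 - u.1 == 1) || (u.1 - v.1 == 1))       (* E-W *)
  | AY => (u.1 == v.1) && ((v.2 - u.2 == 1) || (u.2 - v.2 == 1))       (* NNE-SSW *)
  | AZ => ((v.1 - u.1 == -1) && (v.2 - u.2 == 1))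
          || ((v.1 - u.1 == 1) && (v.2 - u.2 == -1))                    (* NNW-SSE *)
  end.

Definition adj (u v : node) : bool := [|| adjq AX u v, adjq AY u v | adjq AZ u v].

Fixpoint ppath (T : Type) (R : T -> T -> Prop) (x : T) (s : seq T) : Prop :=
  match s with
  | [::] => True
  | y :: s' => R x y /\ ppath R y s'
  end.

Definition gpath (S : node -> Prop) (u : node) (s : seq node) (v : node) : Prop :=
  S u /\ ppath (fun a b => S a /\ S b /\ adj a b) u s /\ last u s = v.

Definition connected_set (S : node -> Prop) : Prop :=
  forall u v, S u -> S v -> exists s, gpath S u s v.

Definition tri_grid_graph (V : seq node) : Prop :=
  connected_set (fun u => u \in V).

Definition simple_tri_grid_graph (V : seq node) : Prop :=
  tri_grid_graph V /\ connected_set (fun u => u \notin V).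

(* w lies in portal_q(u) : connected component of (V, E_q) containing u *)
Definition portal (q : axis) (V : seq node) (u w : node) : Prop :=
  u \in V /\ w \in V /\
  exists s, ppath (fun a b => a \in V /\ b \in V /\ adjq q a b) u s /\ last u s = w.

Definition is_portal (q : axis) (V : seq node) (P : node -> Prop) : Prop :=
  exists u, u \in V /\ forall w, P w <-> portal q V u w.

Definition portal_adj (q : axis) (V : seq node) (a b : node) : Prop :=
  exists a' b', portal q V a a' /\ portal q V b b' /\ adj a' b'.

(* there is a walk of length k in P_q from portal_q(u) to portal_q(v)
   (portals represented by nodes) *)
Definition qwalk (q : axis) (V : seq node) (u v : node) (k : nat) : Prop :=
  exists s : seq node, size s = k /\ ppath (portal_adj q V) u s /\
    portal q V (last u s) v.

Definition qdist (q : axis) (V : seq node) (u v : node) (d : nat) : Prop :=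
  qwalk q V u v d /\ forall m, (m < d)%N -> ~ qwalk q V u v m.

(* Cut a shortest walk of the portal graph from g to g' at its portal x at
   distance ceil(d/2) from g.  Realising the parts of the walk before and after x
   by paths of M gives paths that stay strictly closer to g, resp. g', than x;
   a gg'-path avoiding portal(x) would join them into a path from the portal
   preceding x to the portal following x that avoids portal(x).  In row/column
   coordinates adapted to q a portal is a row segment bounded by two nodes
   outside M, and closing such a path through the segment yields a loop of M
   crossing a horizontal half-line issued near one of these nodes (or near a gap
   of the neighbouring row) an odd number of times.  Since the complement of a
   simple grid graph is connected, that node can be moved to infinity without
   changing the parity, which is then 0.  Finally, a node with the prescribed
   distances lies on another geodesic, and the path realising it meets
   portal(x) exactly where the distances force it to be portal-equivalent to
   that node. *)

From mathcomp Require Import all_boot all_order all_algebra zify.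
From Stdlib Require Import Classical.
Set Implicit Arguments. Unset Strict Implicit. Unset Printing Implicit Defensive.
Import Order.TTheory GRing.Theory Num.Theory.
Local Open Scope ring_scope.

Definition qrow (q : axis) (u : node) : int :=
  match q with AX => u.2 | AY => u.1 | AZ => u.1 + u.2 end.
Definition qcol (q : axis) (u : node) : int :=
  match q with AX => u.1 | AY => u.2 | AZ => - u.1 end.
Definition qnode (q : axis) (r c : int) : node :=
  match q with AX => (c, r) | AY => (r, c) | AZ => (- c, r + c) end.

Lemma qrow_node q r c : qrow q (qnode q r c) = r.
Proof. case: q => /=; lia. Qed.

Lemma qcol_node q r c : qcol q (qnode q r c) = c.
Proof. case: q => /=; lia. Qed.

Lemma qnodeK q u : qnode q (qrow q u) (qcol q u) = u.
Proof. case: u => a b; case: q => /=; congr pair; lia. Qed.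

Lemma qrowcol_inj q u v : qrow q u = qrow q v -> qcol q u = qcol q v -> u = v.
Proof. by move=> Er Ec; rewrite -(qnodeK q u) -(qnodeK q v) Er Ec. Qed.

Definition grid_adj (r c r' c' : int) : Prop :=
  r' = r /\ (c' = c + 1 \/ c' = c - 1) \/
  r' = r + 1 /\ (c' = c \/ c' = c - 1) \/
  r' = r - 1 /\ (c' = c \/ c' = c + 1).

Lemma adj_grid q u v : adj u v -> grid_adj (qrow q u) (qcol q u) (qrow q v) (qcol q v).
Proof. case: u => a b; case: v => c d; rewrite /adj /adjq /grid_adj /=; case: q => /=; lia. Qed.

Lemma adjq_grid q u v : adjq q u v ->
  qrow q u = qrow q v /\ (qcol q v = qcol q u + 1 \/ qcol q v = qcol q u - 1).
Proof. case: u => a b; case: v => c d; case: q; rewrite /adjq /=; lia. Qed.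

Lemma adjq_adj q u v : adjq q u v -> adj u v.
Proof. case: u => a b; case: v => c d; case: q; rewrite /adj /adjq /=; lia. Qed.

Lemma adj_adjq q u v : adj u v -> qrow q u = qrow q v -> adjq q u v.
Proof. case: u => a b; case: v => c d; case: q; rewrite /adj /adjq /=; lia. Qed.

Lemma adj_sym u v : adj u v -> adj v u.
Proof. case: u => a b; case: v => c d; rewrite /adj /adjq /=; lia. Qed.

Lemma adjq_sym q u v : adjq q u v -> adjq q v u.
Proof. case: u => a b; case: v => c d; case: q; rewrite /adjq /=; lia. Qed.

Lemma adjq_qnode q r c c' : (c' = c + 1 \/ c' = c - 1) -> adjq q (qnode q r c) (qnode q r c').
Proof. case: q; rewrite /adjq /=; lia. Qed.

Lemma ppath_cat T (R : T -> T -> Prop) x s1 s2 :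
  ppath R x (s1 ++ s2) <-> ppath R x s1 /\ ppath R (last x s1) s2.
Proof. by elim: s1 x => [|y s1 IH] x /=; [tauto | rewrite IH; tauto]. Qed.

Lemma sub_ppath T (R R' : T -> T -> Prop) x s :
  (forall a b, R a b -> R' a b) -> ppath R x s -> ppath R' x s.
Proof. by move=> RR'; elim: s x => [|y s IH] x //= [/RR' ? /IH]. Qed.

Lemma ppath_restrict (T : eqType) (R : T -> T -> Prop) (P : T -> Prop) x s :
  ppath R x s -> (forall z, z \in x :: s -> P z) ->
  ppath (fun a b => R a b /\ P a /\ P b) x s.
Proof.
elim: s x => [|y s IH] x //= [Rxy Rs] Ps; split.
- by split=> //; split; apply: Ps; rewrite !inE eqxx ?orbT.
- by apply: IH => // z zs; apply: Ps; rewrite inE zs orbT.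
Qed.

Lemma ppath_rev T (R : T -> T -> Prop) x s :
  (forall a b, R a b -> R b a) -> ppath R x s ->
  exists t, ppath R (last x s) t /\ last (last x s) t = x.
Proof.
move=> Rsym; elim: s x => [|y s IH] x /=; first by exists [::].
case=> Rxy /IH [t [Rt Lt]]; exists (rcons t x).
by rewrite -cats1 ppath_cat last_cat /= Lt; split=> //; split=> //; split=> //; apply: Rsym.
Qed.

Lemma gpath_cat (S : node -> Prop) u v w s1 s2 :
  gpath S u s1 v -> gpath S v s2 w -> gpath S u (s1 ++ s2) w.
Proof. by move=> [Su [P1 L1]] [_ [P2 L2]]; split=> //; rewrite ppath_cat last_cat L1. Qed.

Lemma gpath_cons (S : node -> Prop) u v w s :
  S u -> adj u v -> gpath S v s w -> gpath S u (v :: s) w.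
Proof. by move=> Su uv [Sv [P L]]; split=> //; split. Qed.

Lemma gpath_mem (S : node -> Prop) u s w : gpath S u s w -> forall z, z \in u :: s -> S z.
Proof.
move=> [Su [Ps _]]; elim: s u Su Ps => [|y s IH] u Su /=.
  by move=> _ z; rewrite inE => /eqP ->.
by move=> [[_ [Sy _]] Ps] z; rewrite inE => /predU1P [-> //|]; apply: IH.
Qed.

Fixpoint walk_parity (T : Type) (f : T -> T -> bool) (x : T) (s : seq T) : bool :=
  if s is y :: s' then f x y (+) walk_parity f y s' else false.

Lemma walk_parity_cat T (f : T -> T -> bool) x s1 s2 :
  walk_parity f x (s1 ++ s2) = walk_parity f x s1 (+) walk_parity f (last x s1) s2.
Proof. by elim: s1 x => [|y s IH] x //=; rewrite IH addbA. Qed.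

Lemma eq_in_walk_parity T (R : T -> T -> Prop) (f g : T -> T -> bool) x s :
  (forall a b, R a b -> f a b = g a b) -> ppath R x s ->
  walk_parity f x s = walk_parity g x s.
Proof. by move=> fg; elim: s x => [|y s IH] x //= [/fg -> /IH ->]. Qed.

Lemma walk_parity0 T (R : T -> T -> Prop) (f : T -> T -> bool) x s :
  (forall a b, R a b -> f a b = false) -> ppath R x s -> walk_parity f x s = false.
Proof.
move=> f0 /(eq_in_walk_parity (g := fun _ _ => false) f0) ->.
by elim: s x => //= y s IH x; rewrite IH.
Qed.

Lemma walk_parityX T (f g : T -> T -> bool) x s :
  walk_parity (fun a b => f a b (+) g a b) x s = walk_parity f x s (+) walk_parity g x s.
Proof.
elim: s x => [|y s IH] x //=; rewrite IH.
by case: (f x y); case: (g x y); case: (walk_parity f y s); case: (walk_parity g y s).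
Qed.

Lemma walk_parity_telescope T (U : T -> bool) x s :
  walk_parity (fun a b => U a (+) U b) x s = U x (+) U (last x s).
Proof.
elim: s x => [|y s IH] x /=; first by rewrite addbb.
by rewrite IH addbA -(addbA (U x)) addbb addbF.
Qed.

(* With node (r, c) drawn at (c + r/2, r), [cross_up r c] tells whether a step
   crosses the eastward half-line at height r + 1/2 issued from the interior of
   the triangle (r, c), (r, c + 1), (r + 1, c); [cross_down r c] is the
   analogue at height r - 1/2. *)
Definition cross_up (r c ra ca rb cb : int) : bool :=
  (ra == r) && (c < ca) && (rb == r + 1) || (rb == r) && (c < cb) && (ra == r + 1).
Definition cross_down (r c ra ca rb cb : int) : bool :=
  (ra == r) && (c < ca) && (rb == r - 1) || (rb == r) && (c < cb) && (ra == r - 1).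

Lemma cross_up_shift r c c' ra ca rb cb : (c' = c + 1 \/ c' = c - 1) ->
  grid_adj ra ca rb cb -> ~ (ra = r /\ ca = c') -> ~ (rb = r /\ cb = c') ->
  ~ (ra = r /\ ca = c) -> ~ (rb = r /\ cb = c) ->
  cross_up r c ra ca rb cb = cross_up r c' ra ca rb cb.
Proof.
rewrite /cross_up /grid_adj => Hc Hab H1 H2 H3 H4.
case: Hc => ?; case: Hab => [[? [?|?]]|[[? [?|?]]|[? [?|?]]]]; subst; lia.
Qed.

Lemma cross_up_down_shift r c c' ra ca rb cb : (c' = c \/ c' = c - 1) ->
  grid_adj ra ca rb cb -> ~ (ra = r /\ ca = c) -> ~ (rb = r /\ cb = c) ->
  ~ (ra = r + 1 /\ ca = c') -> ~ (rb = r + 1 /\ cb = c') ->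
  cross_up r c ra ca rb cb = cross_down (r + 1) c' ra ca rb cb.
Proof.
rewrite /cross_up /cross_down /grid_adj => Hc Hab H1 H2 H3 H4.
case: Hc => ?; case: Hab => [[? [?|?]]|[[? [?|?]]|[? [?|?]]]]; subst; lia.
Qed.

(* Both half-lines together cross exactly the steps that change either the
   test [r < row] or the lexicographic test [(r, c) < (row, col)], so on a
   loop their parities agree. *)
Lemma cross_up_xor_down r c ra ca rb cb :
  grid_adj ra ca rb cb -> ~ (ra = r /\ ca = c) -> ~ (rb = r /\ cb = c) ->
  cross_up r c ra ca rb cb (+) cross_down r c ra ca rb cb =
  ((r < ra) (+) (r < rb)) (+)
  (((r < ra) || (ra == r) && (c < ca)) (+) ((r < rb) || (rb == r) && (c < cb))).
Proof.
rewrite /cross_up /cross_down /grid_adj => Hab H1 H2.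
case: Hab => [[? [?|?]]|[[? [?|?]]|[? [?|?]]]]; subst; lia.
Qed.

Lemma cross_up_row r c ra ca rb cb : ra = rb -> cross_up r c ra ca rb cb = false.
Proof. rewrite /cross_up => ->; lia. Qed.

Lemma cross_down_row r c ra ca rb cb : ra = rb -> cross_down r c ra ca rb cb = false.
Proof. rewrite /cross_down => ->; lia. Qed.

Section Crossings.
Variables (q : axis) (M : seq node).

Definition crossU (p a b : node) : bool :=
  cross_up (qrow q p) (qcol q p) (qrow q a) (qcol q a) (qrow q b) (qcol q b).
Definition crossD (p a b : node) : bool :=
  cross_down (qrow q p) (qcol q p) (qrow q a) (qcol q a) (qrow q b) (qcol q b).

Definition madj (a b : node) : Prop := a \in M /\ b \in M /\ adj a b.

Definition even_on_loops (f : node -> node -> bool) : Prop :=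
  forall x s, ppath madj x s -> last x s = x -> walk_parity f x s = false.

Lemma qrowcol_notin p a : p \notin M -> a \in M -> ~ (qrow q a = qrow q p /\ qcol q a = qcol q p).
Proof. by move=> pM aM [Er Ec]; move: pM; rewrite -(qrowcol_inj Er Ec) aM. Qed.

Definition col_bound : nat := \max_(z <- M) `|qcol q z|%N.

Lemma col_bound_max z : z \in M -> (`|qcol q z| <= col_bound)%N.
Proof. by move=> zM; rewrite /col_bound -big_filter; apply: leq_bigmax_seq; rewrite ?mem_filter. Qed.

Lemma far_notin r c : (col_bound < `|c|)%N -> qnode q r c \notin M.
Proof. by move=> Hc; apply/negP => /col_bound_max; rewrite qcol_node; lia. Qed.

Lemma crossU_crossD_loop p x s : p \notin M -> ppath madj x s -> last x s = x ->
  walk_parity (crossU p) x s = walk_parity (crossD p) x s.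
Proof.
move=> pM P L.
pose H z := qrow q p < qrow q z.
pose U z := (qrow q p < qrow q z) || (qrow q z == qrow q p) && (qcol q p < qcol q z).
have E : walk_parity (fun a b => crossU p a b (+) crossD p a b) x s =
         walk_parity (fun a b => (H a (+) H b) (+) (U a (+) U b)) x s.
  apply: (eq_in_walk_parity _ P) => a b [aM [bM ab]].
  by apply: cross_up_xor_down; [apply: adj_grid | apply: qrowcol_notin | apply: qrowcol_notin].
move: E; rewrite (walk_parityX (crossU p)) (walk_parityX (fun a b => H a (+) H b)).
rewrite !walk_parity_telescope L !addbb.
by case: (walk_parity (crossU p) x s); case: (walk_parity (crossD p) x s).
Qed.

Lemma crossU_adj_loop p p' x s : p \notin M -> p' \notin M -> adj p p' ->
  ppath madj x s -> last x s = x ->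
  walk_parity (crossU p) x s = walk_parity (crossU p') x s.
Proof.
move=> pM p'M pp' P L.
have nM z := @qrowcol_notin _ z pM; have n'M z := @qrowcol_notin _ z p'M.
case: (adj_grid q pp') => [[Er Ec]|[[Er Ec]|[Er Ec]]].
- apply: (eq_in_walk_parity _ P) => a b [aM [bM ab]].
  rewrite /crossU Er; apply: cross_up_shift (adj_grid q ab) _ _ (nM _ aM) (nM _ bM) => //;
    by rewrite -Er; apply: n'M.
- rewrite (crossU_crossD_loop p'M P L).
  apply: (eq_in_walk_parity _ P) => a b [aM [bM ab]].
  rewrite /crossU /crossD Er; apply: cross_up_down_shift (adj_grid q ab) (nM _ aM) (nM _ bM) _ _ => //;
    by rewrite -Er; apply: n'M.
- rewrite (crossU_crossD_loop pM P L); symmetry.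
  have Er' : qrow q p = qrow q p' + 1 by lia.
  apply: (eq_in_walk_parity _ P) => a b [aM [bM ab]].
  rewrite /crossU /crossD Er'; apply: cross_up_down_shift (adj_grid q ab) (n'M _ aM) (n'M _ bM) _ _;
    by [lia | rewrite -Er'; apply: nM].
Qed.

Lemma crossU_far x s : ppath madj x s ->
  walk_parity (crossU (qnode q 0 col_bound.+1%:Z)) x s = false.
Proof.
apply: walk_parity0 => a b [/col_bound_max aM [/col_bound_max bM _]].
rewrite /crossU /cross_up qrow_node qcol_node; lia.
Qed.

(* A node outside a simple grid graph can be moved to infinity through the
   complement without changing the crossing parity of a loop of M. *)
Lemma crossU_even p : simple_tri_grid_graph M -> p \notin M -> even_on_loops (crossU p).
Proof.
move=> [_ coM] pM x s P L.
set pf := qnode q 0 col_bound.+1%:Z.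
have pfM : pf \notin M by apply: far_notin; lia.
have [t [_ [Pt Lt]]] := coM p pf pM pfM.
rewrite -(crossU_far P) -/pf -Lt.
elim: t p pM Pt {Lt} => [|y t IH] p pM //= [[_ [yM py]] Pt].
by rewrite (crossU_adj_loop pM yM py P L); apply: IH.
Qed.

Lemma crossD_even p : simple_tri_grid_graph M -> p \notin M -> even_on_loops (crossD p).
Proof. by move=> sM pM x s P L; rewrite -(crossU_crossD_loop pM P L); apply: crossU_even. Qed.

Lemma even_on_loopsX f g : even_on_loops f -> even_on_loops g ->
  even_on_loops (fun a b => f a b (+) g a b).
Proof. by move=> ef eg x s P L; rewrite walk_parityX ef ?eg. Qed.

End Crossings.

Section Portals.
Variables (q : axis) (M : seq node).
Local Notation portal := (portal q M).

Lemma portal_refl u : u \in M -> portal u u.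
Proof. by move=> uM; split=> //; split=> //; exists [::]. Qed.

Lemma portal_mem u v : portal u v -> u \in M /\ v \in M.
Proof. by case=> [? [? _]]. Qed.

Lemma portal_rcons u y z : portal u y -> adjq q y z -> z \in M -> portal u z.
Proof.
move=> [uM [yM [s [Ps Ls]]]] yz zM; split=> //; split=> //.
by exists (rcons s z); rewrite -cats1 ppath_cat last_cat /= Ls.
Qed.

Lemma portal_trans u v w : portal u v -> portal v w -> portal u w.
Proof.
move=> [uM [_ [s [Ps Ls]]]] [_ [wM [t [Pt Lt]]]]; split=> //; split=> //.
by exists (s ++ t); rewrite ppath_cat last_cat Ls.
Qed.

Lemma portal_sym u v : portal u v -> portal v u.
Proof.
move=> [uM [vM [s [Ps Ls]]]]; split=> //; split=> //.
have [|t [Pt Lt]] := ppath_rev _ Ps; last by exists t; rewrite -Ls.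
by move=> a b [aM [bM /adjq_sym ba]].
Qed.

Lemma portal_row u v : portal u v -> qrow q u = qrow q v.
Proof.
move=> [_ [_ [s [Ps <-]]]]; elim: s u Ps => [|y s IH] u //= [[_ [_ /adjq_grid [-> _]]]].
exact: IH.
Qed.

Lemma portal_side u v z : portal u v -> z \notin M -> qrow q z = qrow q u ->
  (qcol q u < qcol q z -> qcol q v < qcol q z) /\ (qcol q z < qcol q u -> qcol q z < qcol q v).
Proof.
move=> [uM [_ [s [Ps <-]]]] zM; elim: s u uM Ps => [|y s IH] u uM //= [[_ [yM uy]] Ps] Er.
have [E1 E2] := adjq_grid uy.
have yz := qrowcol_notin (q := q) zM yM.
have [IH1 IH2] := IH y yM Ps (etrans Er E1).
by split=> H; [apply: IH1 | apply: IH2]; lia.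
Qed.

Lemma portal_run z (sg : int) : z \in M -> (sg = 1 \/ sg = -1) ->
  exists k : nat, qnode q (qrow q z) (qcol q z + sg * k%:Z) \notin M /\
    forall j : nat, (j < k)%N -> portal z (qnode q (qrow q z) (qcol q z + sg * j%:Z)).
Proof.
move=> zM sg1.
have [k kM kmin] : exists2 k : nat, qnode q (qrow q z) (qcol q z + sg * k%:Z) \notin M &
    forall j : nat, qnode q (qrow q z) (qcol q z + sg * j%:Z) \notin M -> (k <= j)%N.
  have ex : exists k : nat, qnode q (qrow q z) (qcol q z + sg * k%:Z) \notin M.
    exists (col_bound q M + `|qcol q z|).+1; apply: far_notin; case: sg1 => ->; lia.
  by case: (ex_minnP ex) => k; exists k.
exists k; split=> //; elim=> [|j IH] jk.
  by rewrite mulr0 addr0 qnodeK; apply: portal_refl.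
apply: (portal_rcons (IH (ltnW jk))); first by apply: adjq_qnode; case: sg1 => ->; lia.
by apply: contraT => /kmin; lia.
Qed.

Lemma portal_interval p : p \in M -> exists L R,
  [/\ L \notin M, R \notin M, qrow q L = qrow q p, qrow q R = qrow q p
    & qcol q L < qcol q p < qcol q R] /\
  forall y, portal p y <-> qrow q y = qrow q p /\ qcol q L < qcol q y < qcol q R.
Proof.
move=> pM; set r := qrow q p; set c := qcol q p.
have [kR [RM Rrun]] := portal_run pM (or_introl erefl).
have [kL [LM Lrun]] := portal_run pM (or_intror erefl).
have run_pos sg : qnode q r (c + sg * 0%:Z) \notin M -> False.
  by rewrite mulr0 addr0 qnodeK pM.
exists (qnode q r (c + -1 * kL%:Z)), (qnode q r (c + 1 * kR%:Z)).
rewrite !qrow_node !qcol_node.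
have kL0 : (0 < kL)%N by case: kL LM {Lrun} => // /run_pos.
have kR0 : (0 < kR)%N by case: kR RM {Rrun} => // /run_pos.
split; first by split=> //; lia.
move=> y; split=> [py | [yr yc]].
  have E := esym (portal_row py); split=> //.
  have [/(_ _) + _] := portal_side py RM (qrow_node _ _ _).
  have [_ /(_ _) +] := portal_side py LM (qrow_node _ _ _).
  by rewrite !qcol_node; lia.
case: (lerP c (qcol q y)) => cy.
  have -> : y = qnode q r (c + 1 * `|qcol q y - c|%:Z).
    by apply: (@qrowcol_inj q); rewrite ?qrow_node ?qcol_node //; lia.
  by apply: Rrun; lia.
have -> : y = qnode q r (c + -1 * `|c - qcol q y|%:Z).
  by apply: (@qrowcol_inj q); rewrite ?qrow_node ?qcol_node //; lia.
by apply: Lrun; lia.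
Qed.

Lemma row_gap s t : s \in M -> t \in M -> qrow q s = qrow q t -> ~ portal s t ->
  exists G, [/\ G \notin M, qrow q G = qrow q s &
    qcol q s < qcol q G < qcol q t \/ qcol q t < qcol q G < qcol q s].
Proof.
wlog st : s t / qcol q s < qcol q t.
  move=> IH sM tM Er N; case: (ltgtP (qcol q s) (qcol q t)) => c.
  - exact: IH.
  - have [|G [GM GE Gc]] := IH t s c tM sM (esym Er); first by move/portal_sym.
    by exists G; split=> //; [rewrite GE | lia].
  - by case: N; rewrite (qrowcol_inj Er c); apply: portal_refl.
move=> sM tM Er N.
have [L [R [[_ RM _ RE cR] Hs]]] := portal_interval sM.
exists R; split=> //; left; have tR := qrowcol_notin (q := q) RM tM.
case: (ltP (qcol q t) (qcol q R)) => tc; last lia.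
by case: N; apply/Hs; lia.
Qed.

Lemma portal_path u w : portal u w ->
  exists s, gpath (fun z => z \in M) u s w /\ forall z, z \in u :: s -> portal u z.
Proof.
move=> [uM [wM [s [Ps <-]]]]; exists s; split.
  by split=> //; split=> //; apply: sub_ppath Ps => a b [aM [bM /adjq_adj ab]].
elim: s u uM Ps => [|y s IH] u uM /=.
  by move=> _ z; rewrite inE => /eqP ->; apply: portal_refl.
move=> [[_ [yM uy]] Ps] z; rewrite inE => /predU1P [->|zs]; first exact: portal_refl.
by apply: portal_trans (IH y yM Ps z zs); apply: portal_rcons (portal_refl uM) uy yM.
Qed.

End Portals.

Section Loops.
Variables (q : axis) (M : seq node).
Local Notation portal := (portal q M).

Definition row_free (f : node -> node -> bool) : Prop :=
  forall a b, qrow q a = qrow q b -> f a b = false.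

Lemma row_free_walk f x s : row_free f ->
  ppath (fun a b => a \in M /\ b \in M /\ adjq q a b) x s -> walk_parity f x s = false.
Proof. by move=> f0; apply: walk_parity0 => a b [_ [_ /adjq_grid [/f0 ->]]]. Qed.

(* The loop goes p1 -> a ~> u -> ... -> w ~> b -> p2 ~> p1, where the three
   ~> legs stay inside a portal, i.e. inside a row. *)
Lemma loop_parity f p1 p2 a b u w pi : even_on_loops M f -> row_free f ->
  portal p2 p1 -> adj p1 a -> adj b p2 -> portal a u -> portal w b ->
  ppath (madj M) u pi -> last u pi = w ->
  f p1 a (+) walk_parity f u pi (+) f b p2 = false.
Proof.
move=> ef f0 [p2M [p1M [sP [PP LP]]]] p1a bp2 [aM [uM [sA [PA LA]]]] [_ [bM [sB [PB LB]]]] Ppi Lpi.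
have madj_q x s : ppath (fun a b => a \in M /\ b \in M /\ adjq q a b) x s -> ppath (madj M) x s.
  by apply: sub_ppath => x' y' [? [? /adjq_adj ?]].
have := ef p1 (a :: sA ++ pi ++ sB ++ p2 :: sP).
rewrite /= !walk_parity_cat !last_cat LA Lpi LB /= LP.
rewrite !(row_free_walk f0 PA, row_free_walk f0 PB, row_free_walk f0 PP) addbF.
rewrite addFb addbA; apply=> //=; split; first by split=> //; split.
rewrite !ppath_cat LA Lpi LB /=; do !split=> //; exact: madj_q.
Qed.

Lemma crossU_row_free p : row_free (crossU q p).
Proof. by move=> a b E; apply: cross_up_row. Qed.

Lemma crossD_row_free p : row_free (crossD q p).
Proof. by move=> a b E; apply: cross_down_row. Qed.

End Loops.

Lemma cross_up_segment r cL cR ra ca rb cb : grid_adj ra ca rb cb ->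
  (ra = r -> ca < cL \/ cR < ca) -> (rb = r -> cb < cL \/ cR < cb) -> cL < cR ->
  cross_up r cL ra ca rb cb = cross_up r cR ra ca rb cb.
Proof.
rewrite /cross_up /grid_adj => Hab Ha Hb LR.
case: Hab => [[? [?|?]]|[[? [?|?]]|[? [?|?]]]]; subst; lia.
Qed.

Lemma cross_down_above_segment r cL cR c ra ca rb cb : grid_adj ra ca rb cb ->
  (ra = r -> ca < cL \/ cR < ca) -> (rb = r -> cb < cL \/ cR < cb) -> cL < c -> c + 1 < cR ->
  cross_down (r + 1) c ra ca rb cb = cross_up r cR ra ca rb cb.
Proof.
rewrite /cross_up /cross_down /grid_adj => Hab Ha Hb Lc cR'.
case: Hab => [[? [?|?]]|[[? [?|?]]|[? [?|?]]]]; subst; lia.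
Qed.

Lemma cross_up_below_segment r cL cR c ra ca rb cb : grid_adj ra ca rb cb ->
  (ra = r -> ca < cL \/ cR < ca) -> (rb = r -> cb < cL \/ cR < cb) -> cL < c - 1 -> c < cR ->
  cross_up (r - 1) c ra ca rb cb = cross_down r cR ra ca rb cb.
Proof.
rewrite /cross_up /cross_down /grid_adj => Hab Ha Hb Lc cR'.
case: Hab => [[? [?|?]]|[[? [?|?]]|[? [?|?]]]]; subst; lia.
Qed.

Lemma cross_segment_opposite r cL cR c1 c2 ra ca rb cb :
  grid_adj ra ca r c1 -> grid_adj rb cb r c2 -> ra <> r -> rb <> r -> ra <> rb ->
  cL < c1 < cR -> cL < c2 < cR ->
  (cross_up r cL r c1 ra ca (+) cross_up r cR r c1 ra ca) (+)
  (cross_up r cL rb cb r c2 (+) cross_up r cR rb cb r c2) = true.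
Proof.
rewrite /cross_up /grid_adj => Ha Hb ar br ab c1LR c2LR.
case: Ha => [[? [?|?]]|[[? [?|?]]|[? [?|?]]]]; subst; try lia;
case: Hb => [[? [?|?]]|[[? [?|?]]|[? [?|?]]]]; subst; lia.
Qed.

Lemma cross_segment_above r cL cR c1 c2 c ca cb :
  grid_adj (r + 1) ca r c1 -> grid_adj (r + 1) cb r c2 ->
  ca < c < cb \/ cb < c < ca -> cL < c1 < cR -> cL < c2 < cR ->
  (cross_down (r + 1) c r c1 (r + 1) ca (+) cross_up r cR r c1 (r + 1) ca) (+)
  (cross_down (r + 1) c (r + 1) cb r c2 (+) cross_up r cR (r + 1) cb r c2) = true
  /\ cL < c /\ c + 1 < cR.
Proof.
rewrite /cross_up /cross_down /grid_adj => Ha Hb abc c1LR c2LR.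
case: Ha => [[? [?|?]]|[[? [?|?]]|[? [?|?]]]]; try lia;
case: Hb => [[? [?|?]]|[[? [?|?]]|[? [?|?]]]]; try lia; subst; lia.
Qed.

Lemma cross_segment_below r cL cR c1 c2 c ca cb :
  grid_adj (r - 1) ca r c1 -> grid_adj (r - 1) cb r c2 ->
  ca < c < cb \/ cb < c < ca -> cL < c1 < cR -> cL < c2 < cR ->
  (cross_up (r - 1) c r c1 (r - 1) ca (+) cross_down r cR r c1 (r - 1) ca) (+)
  (cross_up (r - 1) c (r - 1) cb r c2 (+) cross_down r cR (r - 1) cb r c2) = true
  /\ cL < c - 1 /\ c < cR.
Proof.
rewrite /cross_up /cross_down /grid_adj => Ha Hb abc c1LR c2LR.
case: Ha => [[? [?|?]]|[[? [?|?]]|[? [?|?]]]]; try lia;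
case: Hb => [[? [?|?]]|[[? [?|?]]|[? [?|?]]]]; try lia; subst; lia.
Qed.

(* Row r strictly between the non-M nodes L and R is a portal, left towards a
   and entered from b.  Closing a path that avoids the segment through
   a -> p1 and p2 -> b gives a loop crossing the segment an odd number of
   times.  The half-lines of L and R (or, when a and b lie on the same side of
   row r, of R and of a non-M node G between a and b) differ exactly along the
   segment, yet each of them is crossed an even number of times. *)
Section SegmentBypass.
Variables (q : axis) (M : seq node) (r : int) (L R p1 p2 a b : node).
Hypotheses (simpleM : simple_tri_grid_graph M) (LM : L \notin M) (RM : R \notin M).
Hypotheses (Lr : qrow q L = r) (Rr : qrow q R = r) (p1r : qrow q p1 = r) (p2r : qrow q p2 = r).
Hypotheses (c1 : qcol q L < qcol q p1 < qcol q R) (c2 : qcol q L < qcol q p2 < qcol q R).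
Hypotheses (ap1 : adj a p1) (p2b : adj p2 b) (ar : qrow q a <> r) (br : qrow q b <> r).

Definition off_segment (z : node) : Prop :=
  qrow q z = r -> qcol q z < qcol q L \/ qcol q R < qcol q z.

Hypothesis loop_ends_even : forall f, even_on_loops M f -> row_free q f ->
  (forall x y, madj M x y -> off_segment x -> off_segment y -> f x y = false) ->
  f p1 a (+) f b p2 = false.

Let Sa : grid_adj (qrow q a) (qcol q a) r (qcol q p1).
Proof. by rewrite -p1r; apply: adj_grid. Qed.

Let Sb : grid_adj (qrow q b) (qcol q b) r (qcol q p2).
Proof. by rewrite -p2r; apply: adj_grid; apply: adj_sym. Qed.

Lemma bypass_opposite : qrow q a <> qrow q b -> False.
Proof.
move=> ab; pose f x y := crossU q L x y (+) crossU q R x y.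
suff: f p1 a (+) f b p2 = false.
  by rewrite /f /crossU Lr Rr p1r p2r (cross_segment_opposite Sa Sb ar br ab c1 c2).
apply: loop_ends_even.
- by apply: even_on_loopsX; apply: crossU_even.
- by move=> x y E; rewrite /f !crossU_row_free.
move=> x y [_ [_ /(adj_grid q) xy]] gx gy; rewrite /f /crossU Lr Rr.
by rewrite (cross_up_segment xy gx gy) ?addbb //; lia.
Qed.

Lemma bypass_above G : G \notin M -> qrow q G = r + 1 -> qrow q a = r + 1 -> qrow q b = r + 1 ->
  qcol q a < qcol q G < qcol q b \/ qcol q b < qcol q G < qcol q a -> False.
Proof.
move=> GM Gr ra rb Gc; move: Sa Sb; rewrite ra rb => Sa' Sb'.
have [ends [LG GR]] := cross_segment_above Sa' Sb' Gc c1 c2.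
pose f x y := crossD q G x y (+) crossU q R x y.
suff: f p1 a (+) f b p2 = false by rewrite /f /crossD /crossU Gr Rr p1r p2r ra rb ends.
apply: loop_ends_even.
- by apply: even_on_loopsX; [apply: crossD_even | apply: crossU_even].
- by move=> x y E; rewrite /f crossD_row_free ?crossU_row_free.
move=> x y [_ [_ /(adj_grid q) xy]] gx gy; rewrite /f /crossD /crossU Gr Rr.
by rewrite (cross_down_above_segment xy gx gy LG GR) addbb.
Qed.

Lemma bypass_below G : G \notin M -> qrow q G = r - 1 -> qrow q a = r - 1 -> qrow q b = r - 1 ->
  qcol q a < qcol q G < qcol q b \/ qcol q b < qcol q G < qcol q a -> False.
Proof.
move=> GM Gr ra rb Gc; move: Sa Sb; rewrite ra rb => Sa' Sb'.
have [ends [LG GR]] := cross_segment_below Sa' Sb' Gc c1 c2.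
pose f x y := crossU q G x y (+) crossD q R x y.
suff: f p1 a (+) f b p2 = false by rewrite /f /crossD /crossU Gr Rr p1r p2r ra rb ends.
apply: loop_ends_even.
- by apply: even_on_loopsX; [apply: crossU_even | apply: crossD_even].
- by move=> x y E; rewrite /f crossU_row_free ?crossD_row_free.
move=> x y [_ [_ /(adj_grid q) xy]] gx gy; rewrite /f /crossD /crossU Gr Rr.
by rewrite (cross_up_below_segment xy gx gy LG GR) addbb.
Qed.

Lemma no_segment_bypass : a \in M -> b \in M -> ~ portal q M a b -> False.
Proof.
move=> aM bM Nab.
have [ra|ra] : qrow q a = r + 1 \/ qrow q a = r - 1 by move: Sa; rewrite /grid_adj; lia.
all: have [rb|rb] : qrow q b = r + 1 \/ qrow q b = r - 1 by move: Sb; rewrite /grid_adj; lia.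
all: try by apply: bypass_opposite; lia.
all: have [G [GM Gr Gc]] := row_gap aM bM (etrans ra (esym rb)) Nab.
- by apply: (bypass_above GM) => //; rewrite Gr.
- by apply: (bypass_below GM) => //; rewrite Gr.
Qed.

End SegmentBypass.

Section Separation.
Variables (q : axis) (M : seq node).
Hypothesis simpleM : simple_tri_grid_graph M.
Local Notation portal := (portal q M).

Lemma portal_separates p u w pi :
  portal_adj q M u p -> portal_adj q M p w ->
  ~ portal p u -> ~ portal p w -> ~ portal u w ->
  gpath (fun z => z \in M) u pi w -> exists2 z, z \in u :: pi & portal p z.
Proof.
move=> [a [p1 [ua [pp1 ap1]]]] [p2 [b [pp2 [wb p2b]]]] Nu Nw Nuw Gpi.
case: (classic (exists2 z, z \in u :: pi & portal p z)) => // avoid; exfalso.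
have [pM p1M] := portal_mem pp1; have [_ aM] := portal_mem ua.
have [_ p2M] := portal_mem pp2; have [_ bM] := portal_mem wb.
have [L [R [[LM RM Lr Rr _] Hseg]]] := portal_interval q pM.
have [p1r c1] := (Hseg p1).1 pp1; have [p2r c2] := (Hseg p2).1 pp2.
apply: (no_segment_bypass simpleM LM RM Lr Rr p1r p2r c1 c2 ap1 p2b _ _ _ aM bM).
- move=> E; apply: Nu; apply: portal_trans (portal_rcons pp1 _ aM) (portal_sym ua).
  by apply: adj_adjq (adj_sym ap1) _; rewrite E p1r.
- move=> E; apply: Nw; apply: portal_trans (portal_rcons pp2 _ bM) (portal_sym wb).
  by apply: adj_adjq p2b _; rewrite E p2r.
- move=> f ef f0 fpi; have [uM [Ppi Lpi]] := Gpi.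
  have := loop_parity ef f0 (portal_trans (portal_sym pp2) pp1) (adj_sym ap1)
    (adj_sym p2b) (portal_sym ua) wb Ppi Lpi.
  suff off z : z \in u :: pi -> z \in M /\ off_segment q (qrow q p) L R z.
    by rewrite (walk_parity0 _ (ppath_restrict Ppi off)) ?addbF // => x y [? [[_ ?] [_ ?]]]; apply: fpi.
  move=> zpi; have zM := gpath_mem Gpi zpi; split=> // E.
  have := qrowcol_notin (q := q) LM zM; have := qrowcol_notin (q := q) RM zM.
  have : ~ (qcol q L < qcol q z < qcol q R) by move=> H; apply: avoid; exists z => //; apply/Hseg.
  lia.
- by move=> ab; apply: Nuw; apply: portal_trans (portal_trans ua ab) (portal_sym wb).
Qed.

End Separation.

Close Scope ring_scope.

Section Walks.
Variables (q : axis) (M : seq node).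
Local Notation portal := (portal q M).
Local Notation padj := (portal_adj q M).
Local Notation qwalk := (qwalk q M).
Local Notation qdist := (qdist q M).

Lemma padj_mem a b : padj a b -> a \in M /\ b \in M.
Proof. by move=> [a' [b' [[aM _] [[bM _] _]]]]. Qed.

Lemma padj_sym a b : padj a b -> padj b a.
Proof. by move=> [a' [b' [aa' [bb' /adj_sym ab]]]]; exists b', a'. Qed.

Lemma padj_portall a a2 b : portal a a2 -> padj a b -> padj a2 b.
Proof. by move=> aa2 [a' [b' [aa' rest]]]; exists a', b'; split=> //; apply: portal_trans (portal_sym aa2) aa'. Qed.

Lemma padj_portalr a b b2 : portal b b2 -> padj a b -> padj a b2.
Proof. by move=> bb2 /padj_sym /(padj_portall bb2) /padj_sym. Qed.

Lemma ppath_padj_last x s : x \in M -> ppath padj x s -> last x s \in M.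
Proof. by elim: s x => [|y s IH] x //= xM [/padj_mem [_ yM] /(IH _ yM)]. Qed.

Lemma qwalk_mem u v k : qwalk u v k -> u \in M /\ v \in M.
Proof.
case=> [[|y s] [_ [/= P L]]]; first exact: portal_mem L.
by split; [apply: (padj_mem P.1).1 | apply: (portal_mem L).2].
Qed.

Lemma portal_qwalk u v : portal u v -> qwalk u v 0.
Proof. by exists [::]. Qed.

Lemma qwalk0_portal u v : qwalk u v 0 -> portal u v.
Proof. by case=> [[|y s] [//= _ [_ L]]]. Qed.

Lemma padj_qwalk u v : padj u v -> qwalk u v 1.
Proof.
move=> uv; have [_ vM] := padj_mem uv.
by exists [:: v]; split=> //; split; [split | apply: portal_refl].
Qed.

Lemma qwalk1_padj u v : qwalk u v 1 -> padj u v.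
Proof.
case=> [s [sz [P L]]]; case: s sz P L => [|y [|z s]] //= _ [uy _] yv.
exact: padj_portalr yv uy.
Qed.

Lemma qwalk_trans u v w k l : qwalk u v k -> qwalk v w l -> qwalk u w (k + l).
Proof.
move=> [s1 [<- [P1 L1]]] [[|y s2] [<- [/= P2 L2]]].
  by exists s1; rewrite addn0; split=> //; split=> //; apply: portal_trans L1 L2.
exists (s1 ++ y :: s2); rewrite size_cat last_cat ppath_cat; split=> //; split=> //.
by split=> //=; split; [apply: padj_portall (portal_sym L1) P2.1 | apply: P2.2].
Qed.

Lemma qwalk_split u v k l : qwalk u v (k + l) -> exists x, qwalk u x k /\ qwalk x v l.
Proof.
move=> W; have [uM _] := qwalk_mem W; move: W => [s [sz [P L]]].
rewrite -(cat_take_drop k s) ppath_cat in P; rewrite -(cat_take_drop k s) last_cat in L.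
have xM := ppath_padj_last uM P.1.
exists (last u (take k s)); split.
  exists (take k s); split; last by split; [apply: P.1 | apply: portal_refl].
  by rewrite size_take sz; case: ltnP => //; lia.
exists (drop k s); split; first by rewrite size_drop sz addKn.
by split; [apply: P.2 | apply: L].
Qed.

Lemma qwalk_sym u v k : qwalk u v k -> qwalk v u k.
Proof.
elim: k u => [|k IH] u; first by move/qwalk0_portal/portal_sym/portal_qwalk.
rewrite -addn1 addnC => /qwalk_split [y [/qwalk1_padj uy /IH vy]].
by rewrite addnC; apply: qwalk_trans vy (padj_qwalk (padj_sym uy)).
Qed.

Lemma qwalk_portal u v u2 v2 k : portal u u2 -> portal v v2 -> qwalk u v k -> qwalk u2 v2 k.
Proof.
move=> uu2 vv2 W; rewrite -[k]add0n -[k]addn0.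
by apply: qwalk_trans (qwalk_trans (portal_qwalk (portal_sym uu2)) W) (portal_qwalk vv2).
Qed.

Lemma qdist_le u v d k : qdist u v d -> qwalk u v k -> d <= k.
Proof. by move=> [_ dmin] W; rewrite leqNgt; apply/negP => /dmin. Qed.

Lemma qdist_walk u v d : qdist u v d -> qwalk u v d.
Proof. by case. Qed.

Lemma qdist_geodesic u v x k l : qdist u v (k + l) -> qwalk u x k -> qwalk x v l ->
  qdist u x k /\ qdist x v l.
Proof.
move=> D ux xv; split; split=> // m lt_m W.
  by have := qdist_le D (qwalk_trans W xv); rewrite leq_add2r leqNgt lt_m.
by have := qdist_le D (qwalk_trans ux W); rewrite leq_add2l leqNgt lt_m.
Qed.

Lemma qdist_sym u v d : qdist u v d -> qdist v u d.
Proof. by move=> [W dmin]; split=> [|m lt_m /qwalk_sym]; [apply: qwalk_sym | apply: dmin]. Qed.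

Lemma qdist_portal u v v2 d : portal v v2 -> qdist u v d -> qdist u v2 d.
Proof.
move=> vv2 [W dmin]; have [uM _] := qwalk_mem W.
split=> [|m lt_m]; first exact: qwalk_portal (portal_refl q uM) vv2 W.
by move/(qwalk_portal (portal_refl q uM) (portal_sym vv2)); apply: dmin.
Qed.

End Walks.

Section Geodesics.
Variables (q : axis) (M : seq node).
Hypothesis simpleM : simple_tri_grid_graph M.
Local Notation portal := (portal q M).
Local Notation qwalk := (qwalk q M).
Local Notation qdist := (qdist q M).
Local Notation gpathM := (gpath (fun z => z \in M)).

Lemma qwalk_gpath u v k : qwalk u v k -> exists s, gpathM u s v /\
  forall z, z \in u :: s -> exists2 j, j <= k & qwalk u z j /\ qwalk z v (k - j).
Proof.
elim: k u => [|k IH] u W; have [uM vM] := qwalk_mem W.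
  have uv := qwalk0_portal W; have [s [G Hs]] := portal_path uv.
  exists s; split=> // z /Hs uz; exists 0 => //; split; first exact: portal_qwalk.
  exact: portal_qwalk (portal_trans (portal_sym uz) uv).
move: (W); rewrite -add1n => /qwalk_split [y [/qwalk1_padj uy yv]].
have [a [y' [ua [yy' ay']]]] := uy.
have [_ aM] := portal_mem ua.
have [s1 [G1 Hs1]] := portal_path ua.
have [s2 [G2 Hs2]] := IH y' (qwalk_portal yy' (portal_refl q vM) yv).
exists (s1 ++ y' :: s2); split; first exact: gpath_cat G1 (gpath_cons aM ay' G2).
move=> z; rewrite -cat_cons mem_cat => /orP [/Hs1 uz | /Hs2 [j jk [y'z zv]]].
  exists 0 => //; split; [exact: portal_qwalk | exact: qwalk_portal uz (portal_refl q vM) W].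
exists j.+1 => //; split; last by rewrite subSS.
by rewrite -add1n; apply: qwalk_trans (padj_qwalk (padj_portalr yy' uy)) y'z.
Qed.

Lemma geodesic_portal_meets g g' x c f pi :
  qdist g g' (c + f) -> qwalk g x c -> qwalk x g' f ->
  gpathM g pi g' -> exists2 z, z \in g :: pi & portal x z.
Proof.
case: c => [|c] D gx xg' Gpi.
  by exists g; [rewrite inE eqxx | apply: portal_sym; apply: qwalk0_portal].
case: f xg' D => [|f] xg' D.
  by exists g'; [case: Gpi => [_ [_ <-]]; apply: mem_last | apply: qwalk0_portal].
have [[gM _] [_ g'M]] := (qwalk_mem gx, qwalk_mem xg').
have far_g z j : qwalk g z j -> j <= c -> ~ portal x z.
  move=> gz jc xz; have := qdist_le D (qwalk_trans (qwalk_portal (portal_refl q gM) (portal_sym xz) gz) xg').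
  lia.
have far_g' z j : qwalk z g' j -> j <= f -> ~ portal x z.
  move=> zg' jf xz; have := qdist_le D (qwalk_trans gx (qwalk_portal (portal_sym xz) (portal_refl q g'M) zg')).
  lia.
move: (gx); rewrite -addn1 => /qwalk_split [xm [gxm /qwalk1_padj xmx]].
move: (xg'); rewrite -add1n => /qwalk_split [y [/qwalk1_padj xy yg']].
have [sP [GP HP]] := qwalk_gpath (qwalk_sym gxm).
have [sS [GS HS]] := qwalk_gpath (qwalk_sym yg').
have Nxmy : ~ portal xm y.
  by move=> xmy; have := qdist_le D (qwalk_trans (qwalk_portal (portal_refl q gM) xmy gxm) yg'); lia.
have [z] := portal_separates simpleM xmx xy (far_g _ _ gxm (leqnn _)) (far_g' _ _ yg' (leqnn _)) Nxmy
  (gpath_cat GP (gpath_cat Gpi GS)).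
rewrite -cat_cons !mem_cat => /or3P [/HP [j _ [_ /qwalk_sym zg]] | zpi | zS] xz.
- by case: (far_g _ _ zg (leq_subr _ _) xz).
- by exists z; rewrite // inE zpi orbT.
have /HS [j jf [/qwalk_sym zg' _]] : z \in g' :: sS by rewrite inE zS orbT.
by case: (far_g' _ _ zg' jf xz).
Qed.

Lemma geodesic_portal_unique g g' x w c f :
  qdist g g' (c + f) -> qwalk g x c -> qwalk x g' f -> qwalk g w c -> qwalk w g' f ->
  portal x w.
Proof.
move=> D gx xg' gw wg'.
have [[gM _] [_ g'M]] := (qwalk_mem gx, qwalk_mem xg'); have [_ wM] := qwalk_mem gw.
have [s1 [G1 H1]] := qwalk_gpath gw; have [s2 [G2 H2]] := qwalk_gpath wg'.
have [z] := geodesic_portal_meets D gx xg' (gpath_cat G1 G2).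
rewrite -cat_cons mem_cat => /orP [/H1 [j jc [gz zw]] | zs2] xz.
  have := qdist_le D (qwalk_trans (qwalk_portal (portal_refl q gM) (portal_sym xz) gz) xg').
  move=> cj; move: zw; have -> : c - j = 0 by lia.
  by move=> /(qwalk_portal (portal_sym xz) (portal_refl q wM)) /qwalk0_portal.
have /H2 [j jf [wz zg']] : z \in w :: s2 by rewrite inE zs2 orbT.
have := qdist_le D (qwalk_trans gx (qwalk_portal (portal_sym xz) (portal_refl q g'M) zg')).
move=> fj; have {fj jf} j0 : j = 0 by lia.
move: wz; rewrite j0 => /(qwalk_portal (portal_refl q wM) (portal_sym xz)) /qwalk0_portal.
exact: portal_sym.
Qed.

End Geodesics.

Theorem mainTheorem3 (M : seq node) (g g' : node) :
  simple_tri_grid_graph M -> g \in M -> g' \in M ->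
  forall (q : axis) (dq : nat), qdist q M g g' dq ->
  let Pq := fun v => v \in M /\ qdist q M g v (uphalf dq) /\ qdist q M g' v (dq./2) in
  is_portal q M Pq /\
  (forall s : seq node, gpath (fun u => u \in M) g s g' ->
     exists2 w, w \in g :: s & Pq w).
Proof.
move=> simpleM gM g'M q dq D Pq.
have split_dq : dq = uphalf dq + dq./2 by lia.
rewrite split_dq in D; have [x [gx xg']] := qwalk_split (qdist_walk D).
have [Dx Dx'] := qdist_geodesic D gx xg'.
have xM := (qwalk_mem gx).2.
have PqP w : portal q M x w -> Pq w.
  move=> xw; split; first by case: (portal_mem xw).
  by split; [apply: qdist_portal xw Dx | apply: qdist_portal xw (qdist_sym Dx')].
split.
  exists x; split=> // w; split=> [[_ [gw g'w]] | /PqP //].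
  exact: geodesic_portal_unique D gx xg' (qdist_walk gw) (qwalk_sym (qdist_walk g'w)).
move=> s /(geodesic_portal_meets simpleM D gx xg') [w ws xw].
by exists w => //; apply: PqP.
Qed.
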